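(* Let $\omega:\mathbb N\to[1,\infty)$ be an unbounded weight on $\mathbb N_{\min}$. Then $(\ell^1_\omega(\mathbb N_{\min}),M_2(\mathbb C))$ is not a uniformly AMNM pair.
   Context: $\mathbb N_{\min}$ is the semilattice $\mathbb N$ with product $\min$; every $\omega:\mathbb N\to[1,\infty)$ is a submultiplicative weight on it. $\ell^1_\omega(\mathbb N_{\min})$ is the Banach space of $a:\mathbb N\to\mathbb C$ with $\|a\|=\sum_n|a(n)|\omega(n)<\infty$, with convolution $\delta_m*\delta_n=\delta_{\min(m,n)}$. $M_2(\mathbb C)$ has the operator norm. For a bounded linear $T:A\to B$ between Banach algebras, $\operatorname{def}(T)=\sup\{\|T(xy)-T(x)T(y)\|:\|x\|,\|y\|\le1\}$ and $\operatorname{Mult}(A,B)$ is the set of bounded multiplicative linear maps (including $0$). $(A,B)$ is a uniformly AMNM pair if for every $\varepsilon>0$ there is $\delta>0$ such that every bounded linear $T:A\to B$ with $\operatorname{def}(T)\le\delta$ satisfies $\operatorname{dist}(T,\operatorname{Mult}(A,B))\le\varepsilon$ in operator norm. *)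

From Stdlib Require Import Reals Lra ClassicalEpsilon.
Open Scope R_scope.

Definition C : Type := (R * R)%type.
Definition C0 : C := (0, 0).
Definition Cadd (z w : C) : C := (fst z + fst w, snd z + snd w).
Definition Copp (z : C) : C := (- fst z, - snd z).
Definition Csub (z w : C) : C := Cadd z (Copp w).
Definition Cmul (z w : C) : C :=
  (fst z * fst w - snd z * snd w, fst z * snd w + snd z * fst w).
Definition Cmod (z : C) : R := sqrt (fst z ^ 2 + snd z ^ 2).

Definition is_glb (E : R -> Prop) (m : R) : Prop :=
  (forall x, E x -> m <= x) /\ (forall b, (forall x, E x -> b <= x) -> b <= m).
(* supremum of a nonempty bounded-above set (junk value otherwise) *)
Definition Rsup (E : R -> Prop) : R := epsilon (inhabits 0) (is_lub E).
(* infimum of a nonempty bounded-below set (junk value otherwise) *)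
Definition Rinf (E : R -> Prop) : R := epsilon (inhabits 0) (is_glb E).
Definition Rseries (u : nat -> R) : R := epsilon (inhabits 0) (infinite_sum u).
Definition Cseries (u : nat -> C) : C :=
  (Rseries (fun n => fst (u n)), Rseries (fun n => snd (u n))).

Definition C2 : Type := (C * C)%type.
Definition C2norm (v : C2) : R := sqrt (Cmod (fst v) ^ 2 + Cmod (snd v) ^ 2).
(* a matrix ((a,b),(c,d)) = [[a b];[c d]] *)
Definition M2 : Type := ((C * C) * (C * C))%type.
Definition M2zero : M2 := ((C0, C0), (C0, C0)).
Definition M2app (A : M2) (v : C2) : C2 :=
  (Cadd (Cmul (fst (fst A)) (fst v)) (Cmul (snd (fst A)) (snd v)),
   Cadd (Cmul (fst (snd A)) (fst v)) (Cmul (snd (snd A)) (snd v))).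
Definition M2add (A B : M2) : M2 :=
  ((Cadd (fst (fst A)) (fst (fst B)), Cadd (snd (fst A)) (snd (fst B))),
   (Cadd (fst (snd A)) (fst (snd B)), Cadd (snd (snd A)) (snd (snd B)))).
Definition M2scale (c : C) (A : M2) : M2 :=
  ((Cmul c (fst (fst A)), Cmul c (snd (fst A))),
   (Cmul c (fst (snd A)), Cmul c (snd (snd A)))).
Definition M2sub (A B : M2) : M2 := M2add A (M2scale (Copp (1, 0)) B).
Definition M2mul (A B : M2) : M2 :=
  let a := fst (fst A) in let b := snd (fst A) in
  let c := fst (snd A) in let d := snd (snd A) in
  let e := fst (fst B) in let f := snd (fst B) in
  let g := fst (snd B) in let h := snd (snd B) in
  ((Cadd (Cmul a e) (Cmul b g), Cadd (Cmul a f) (Cmul b h)),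
   (Cadd (Cmul c e) (Cmul d g), Cadd (Cmul c f) (Cmul d h))).
Definition M2norm (A : M2) : R :=
  Rsup (fun r => exists v : C2, C2norm v <= 1 /\ r = C2norm (M2app A v)).

Definition is_weight (omega : nat -> R) : Prop := forall n, 1 <= omega n.
Definition unbounded (omega : nat -> R) : Prop := forall M, exists n, M < omega n.

Definition in_l1w (omega : nat -> R) (a : nat -> C) : Prop :=
  exists l, infinite_sum (fun n => Cmod (a n) * omega n) l.
Definition l1w_norm (omega : nat -> R) (a : nat -> C) : R :=
  Rseries (fun n => Cmod (a n) * omega n).
Definition seq_add (a b : nat -> C) : nat -> C := fun n => Cadd (a n) (b n).
Definition seq_scale (c : C) (a : nat -> C) : nat -> C := fun n => Cmul c (a n).
Definition Ctail (u : nat -> C) (k : nat) : C := Cseries (fun j => u (k + j)%nat).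
(* convolution on N_min, the continuous bilinear extension of
   delta_m * delta_n = delta_(min m n):
   (a*b)(k) = sum_{min(m,n)=k} a m b n
            = a k * sum_{n>=k} b n + b k * sum_{m>k} a m *)
Definition conv_min (a b : nat -> C) : nat -> C :=
  fun k => Cadd (Cmul (a k) (Ctail b k)) (Cmul (b k) (Ctail a (S k))).

Definition bounded_linear (omega : nat -> R) (T : (nat -> C) -> M2) : Prop :=
  (forall a b, in_l1w omega a -> in_l1w omega b ->
     T (seq_add a b) = M2add (T a) (T b)) /\
  (forall c a, in_l1w omega a -> T (seq_scale c a) = M2scale c (T a)) /\
  (exists K, forall a, in_l1w omega a -> M2norm (T a) <= K * l1w_norm omega a).

Definition opnorm (omega : nat -> R) (T : (nat -> C) -> M2) : R :=
  Rsup (fun r => exists a, in_l1w omega a /\ l1w_norm omega a <= 1 /\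
                           r = M2norm (T a)).

Definition defect (omega : nat -> R) (T : (nat -> C) -> M2) : R :=
  Rsup (fun r => exists x y, in_l1w omega x /\ in_l1w omega y /\
          l1w_norm omega x <= 1 /\ l1w_norm omega y <= 1 /\
          r = M2norm (M2sub (T (conv_min x y)) (M2mul (T x) (T y)))).

(* Mult(A,B): bounded multiplicative linear maps (including 0) *)
Definition is_mult (omega : nat -> R) (S : (nat -> C) -> M2) : Prop :=
  bounded_linear omega S /\
  forall a b, in_l1w omega a -> in_l1w omega b ->
    S (conv_min a b) = M2mul (S a) (S b).

Definition dist_mult (omega : nat -> R) (T : (nat -> C) -> M2) : R :=
  Rinf (fun r => exists S, is_mult omega S /\
                 r = opnorm omega (fun a => M2sub (T a) (S a))).

Definition uniformly_AMNM (omega : nat -> R) : Prop :=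
  forall eps, 0 < eps -> exists delta, 0 < delta /\
    forall T, bounded_linear omega T -> defect omega T <= delta ->
      dist_mult omega T <= eps.

(** We show that
    (l^1_omega(N_min), M_2(C)) is not uniformly AMNM by exhibiting, for every N > 0, a
    bounded linear map T_N : l^1_omega(N_min) -> M_2(C) whose defect is at most
    4 / omega(N), while its distance to every multiplicative map is at least
    1 / (2 omega(0)) (as soon as omega(N) >= omega(0)).

    The tail sums phi_k(a) = sum_{j >= k} a(j) are characters of l^1_omega(N_min): a term
    of the convolution x * y is a difference of consecutive products of tails, so the tail
    series telescopes.  Put W = omega(N), Q = [[1, W], [0, 0]], A = [[1, 2W], [0, -1]] and
      T_N(a) = (phi_0 - phi_N)(a) Q + a(N) A + phi_(N+1)(a) I.
    Only the coefficient a(N) = (phi_N - phi_(N+1))(a) is not multiplicative, and the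
    defect T_N(xy) - T_N(x) T_N(y) = x(N) y(N) [[0, 2W], [0, -2]] is small because
    |x(N)| <= 1 / W on the unit ball.  On the other hand, for a multiplicative S the
    matrices S(delta_0), S(delta_N) obey the idempotent relations of 0, N in N_min, which
    force an algebraic constraint on three of their entries that is violated, with relative
    error 1/2, by T_N(delta_0) = Q and T_N(delta_N) = A. *)

From Stdlib Require Import Reals Lra Lia Psatz FunctionalExtensionality ClassicalEpsilon.
From Coquelicot Require Import Rcomplements Rbar Lim_seq Series Hierarchy.
Open Scope R_scope.

(** * Complex numbers *)

Definition C1 : C := (1, 0).

Lemma C_ring_theory : ring_theory C0 C1 Cadd Cmul Csub Copp (@eq C).
Proof.
  constructor; intros; repeat match goal with z : C |- _ => destruct z end;
    unfold C0, C1, Cadd, Cmul, Csub, Copp; cbn [fst snd];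
    try (apply f_equal2; ring); reflexivity.
Qed.
Add Ring C_ring : C_ring_theory.

Definition rc (x : R) : C := (x, 0).

Lemma sqrt_le_of_sq x t : 0 <= t -> x <= t * t -> sqrt x <= t.
Proof. intros Ht Hx. rewrite <- (sqrt_square t Ht). now apply sqrt_le_1_alt. Qed.

Lemma le_sqrt_of_sq x y : 0 <= x -> x * x <= y -> x <= sqrt y.
Proof. intros Hx Hy. rewrite <- (sqrt_square x Hx). now apply sqrt_le_1_alt. Qed.

Lemma Cmod_ge0 z : 0 <= Cmod z.
Proof. apply sqrt_pos. Qed.

Lemma Cmod_mul z w : Cmod (Cmul z w) = Cmod z * Cmod w.
Proof.
  destruct z as [a b], w as [c d]. unfold Cmod, Cmul; cbn [fst snd].
  rewrite <- sqrt_mult by nra. f_equal. ring.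
Qed.

Lemma Cmod_fst z : Rabs (fst z) <= Cmod z.
Proof.
  destruct z as [a b]. pose proof (proj1 (sqrt_plus_sqr a b)).
  pose proof (Rmax_l (Rabs a) (Rabs b)). unfold Cmod; cbn [fst snd]. lra.
Qed.

Lemma Cmod_snd z : Rabs (snd z) <= Cmod z.
Proof.
  destruct z as [a b]. pose proof (proj1 (sqrt_plus_sqr a b)).
  pose proof (Rmax_r (Rabs a) (Rabs b)). unfold Cmod; cbn [fst snd]. lra.
Qed.

Lemma Cmod_le_parts z : Cmod z <= Rabs (fst z) + Rabs (snd z).
Proof.
  destruct z as [a b]; unfold Cmod; cbn [fst snd].
  pose proof (Rabs_pos a); pose proof (Rabs_pos b).
  pose proof (pow2_abs a); pose proof (pow2_abs b).
  apply sqrt_le_of_sq; nra.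
Qed.

Lemma Cmod_add z w : Cmod (Cadd z w) <= Cmod z + Cmod w.
Proof.
  destruct z as [a b], w as [c d]. unfold Cmod, Cadd; cbn [fst snd].
  pose proof (sqrt_cauchy a b c d) as Hcs. unfold Rsqr in Hcs.
  pose proof (sqrt_sqrt (a^2 + b^2)); pose proof (sqrt_sqrt (c^2 + d^2)).
  pose proof (sqrt_pos (a^2 + b^2)); pose proof (sqrt_pos (c^2 + d^2)).
  apply sqrt_le_of_sq; [lra|].
  replace (a * a + b * b) with (a^2 + b^2) in Hcs by ring.
  replace (c * c + d * d) with (c^2 + d^2) in Hcs by ring.
  assert (0 <= a^2 + b^2) by nra. assert (0 <= c^2 + d^2) by nra. nra.
Qed.

Lemma Cmod_rc x : Cmod (rc x) = Rabs x.
Proof. unfold Cmod, rc; cbn [fst snd]. rewrite <- sqrt_Rsqr_abs. f_equal. unfold Rsqr; ring. Qed.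

Lemma Cmod_opp z : Cmod (Copp z) = Cmod z.
Proof. destruct z; unfold Cmod, Copp; cbn [fst snd]; f_equal; ring. Qed.

Lemma Cmod_C0 : Cmod C0 = 0.
Proof. unfold Cmod, C0; cbn [fst snd]. replace (0^2 + 0^2) with 0 by ring. apply sqrt_0. Qed.

Lemma Cmod_C1 : Cmod C1 = 1.
Proof. unfold Cmod, C1; cbn [fst snd]. replace (1^2 + 0^2) with 1 by ring. apply sqrt_1. Qed.

Lemma Cmod_sub z w : Cmod (Csub z w) <= Cmod z + Cmod w.
Proof. unfold Csub. rewrite <- (Cmod_opp w). apply Cmod_add. Qed.

Lemma Cmod_sub0 z : Cmod (Csub z C0) = Cmod z.
Proof. now replace (Csub z C0) with z by ring. Qed.

Lemma Cmod_sub_triangle z w u : Cmod (Csub z u) <= Cmod (Csub z w) + Cmod (Csub w u).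
Proof. replace (Csub z u) with (Cadd (Csub z w) (Csub w u)) by ring. apply Cmod_add. Qed.

Lemma Cmod_sub_sym z w : Cmod (Csub z w) = Cmod (Csub w z).
Proof. replace (Csub z w) with (Copp (Csub w z)) by ring. apply Cmod_opp. Qed.

Lemma Cmod_lin3 a b c u v t :
  Cmod (Cadd (Cadd (Cmul a u) (Cmul b v)) (Cmul c t))
  <= (Cmod a + Cmod b + Cmod c) * (Cmod u + Cmod v + Cmod t).
Proof.
  eapply Rle_trans; [apply Cmod_add|]. pose proof (Cmod_add (Cmul a u) (Cmul b v)).
  rewrite !Cmod_mul in *.
  pose proof (Cmod_ge0 a); pose proof (Cmod_ge0 b); pose proof (Cmod_ge0 c);
  pose proof (Cmod_ge0 u); pose proof (Cmod_ge0 v); pose proof (Cmod_ge0 t). nra.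
Qed.

Lemma Cmod_rc_double x : 0 <= x -> Cmod (Cadd (rc x) (rc x)) = 2 * x.
Proof.
  intros Hx. replace (Cadd (rc x) (rc x)) with (rc (2 * x)) by (unfold rc, Cadd; cbn; f_equal; ring).
  rewrite Cmod_rc. apply Rabs_right. lra.
Qed.

(** * Suprema and infima *)

Lemma Rsup_lub (E : R -> Prop) : bound E -> (exists x, E x) -> is_lub E (Rsup E).
Proof.
  intros Hb Hne. destruct (completeness E Hb Hne) as [m Hm].
  unfold Rsup. apply epsilon_spec. now exists m.
Qed.

Lemma Rsup_le (E : R -> Prop) b : (exists x, E x) -> (forall x, E x -> x <= b) -> Rsup E <= b.
Proof.
  intros Hne Hb. apply (Rsup_lub E (ex_intro _ b Hb) Hne). exact Hb.
Qed.

Lemma Rsup_ge (E : R -> Prop) x : bound E -> E x -> x <= Rsup E.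
Proof. intros Hb Hx. now apply (Rsup_lub E Hb (ex_intro _ x Hx)). Qed.

(* A nonempty set bounded below has a greatest lower bound (that of its reflection). *)
Lemma glb_exists (E : R -> Prop) b :
  (exists x, E x) -> (forall x, E x -> b <= x) -> exists m, is_glb E m.
Proof.
  intros [x0 Hx0] Hb.
  set (F := fun y => E (- y)).
  assert (HF : bound F) by (exists (- b); intros y Hy; specialize (Hb _ Hy); lra).
  assert (HFne : exists y, F y) by (exists (- x0); unfold F; now rewrite Ropp_involutive).
  destruct (completeness F HF HFne) as [m [Hub Hlub]].
  exists (- m). split.
  - intros x Hx. enough (- x <= m) by lra. apply Hub. unfold F. now rewrite Ropp_involutive.
  - intros c Hc. enough (m <= - c) by lra. apply Hlub. intros y Hy. specialize (Hc _ Hy). lra.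
Qed.

Lemma Rinf_ge (E : R -> Prop) b : (exists x, E x) -> (forall x, E x -> b <= x) -> b <= Rinf E.
Proof.
  intros Hne Hb. unfold Rinf.
  assert (Hglb : is_glb E (epsilon (inhabits 0) (is_glb E)))
    by (apply epsilon_spec; exact (glb_exists E b Hne Hb)).
  now apply Hglb.
Qed.

(** * The operator norm on M_2(C) *)

Ltac m2_ring :=
  unfold M2sub, M2mul, M2add, M2scale, M2zero; change (1, 0) with C1;
  apply injective_projections; cbn [fst snd];
  (apply injective_projections; cbn [fst snd]; ring).

Definition m11 (M : M2) : C := fst (fst M).
Definition m12 (M : M2) : C := snd (fst M).
Definition m21 (M : M2) : C := fst (snd M).
Definition m22 (M : M2) : C := snd (snd M).

Definition entry_sum (M : M2) : R :=
  Cmod (m11 M) + Cmod (m12 M) + Cmod (m21 M) + Cmod (m22 M).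

Lemma C2norm_fst_le v : Cmod (fst v) <= C2norm v.
Proof. apply le_sqrt_of_sq; [apply Cmod_ge0|]. pose proof (pow2_ge_0 (Cmod (snd v))). nra. Qed.

Lemma C2norm_snd_le v : Cmod (snd v) <= C2norm v.
Proof. apply le_sqrt_of_sq; [apply Cmod_ge0|]. pose proof (pow2_ge_0 (Cmod (fst v))). nra. Qed.

Lemma C2norm_le_parts v : C2norm v <= Cmod (fst v) + Cmod (snd v).
Proof.
  pose proof (Cmod_ge0 (fst v)); pose proof (Cmod_ge0 (snd v)).
  apply sqrt_le_of_sq; nra.
Qed.

Lemma C2norm_scale k x y : C2norm (Cmul k x, Cmul k y) = Cmod k * C2norm (x, y).
Proof.
  unfold C2norm; cbn [fst snd]. rewrite !Cmod_mul.
  pose proof (Cmod_ge0 k); pose proof (Cmod_ge0 x); pose proof (Cmod_ge0 y).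
  replace ((Cmod k * Cmod x) ^ 2 + (Cmod k * Cmod y) ^ 2)
    with (Cmod k ^ 2 * (Cmod x ^ 2 + Cmod y ^ 2)) by ring.
  rewrite sqrt_mult_alt by nra. now rewrite sqrt_pow2.
Qed.

Lemma M2app_le_entry_sum M v : C2norm v <= 1 -> C2norm (M2app M v) <= entry_sum M.
Proof.
  intros Hv. pose proof (C2norm_fst_le v); pose proof (C2norm_snd_le v).
  pose proof (Cmod_ge0 (fst v)); pose proof (Cmod_ge0 (snd v)).
  eapply Rle_trans; [apply C2norm_le_parts|].
  destruct M as [[a b] [c d]]. unfold M2app, entry_sum, m11, m12, m21, m22; cbn [fst snd].
  pose proof (Cmod_ge0 a); pose proof (Cmod_ge0 b); pose proof (Cmod_ge0 c); pose proof (Cmod_ge0 d).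
  pose proof (Cmod_add (Cmul a (fst v)) (Cmul b (snd v))).
  pose proof (Cmod_add (Cmul c (fst v)) (Cmul d (snd v))).
  rewrite !Cmod_mul in *. nra.
Qed.

Lemma M2norm_lub M :
  is_lub (fun r => exists v : C2, C2norm v <= 1 /\ r = C2norm (M2app M v)) (M2norm M).
Proof.
  apply Rsup_lub.
  - exists (entry_sum M). intros r [v [Hv ->]]. now apply M2app_le_entry_sum.
  - exists (C2norm (M2app M (C0, C0))), (C0, C0). split; [|reflexivity].
    unfold C2norm; cbn [fst snd]. rewrite Cmod_C0.
    replace (0 ^ 2 + 0 ^ 2) with 0 by ring. rewrite sqrt_0. lra.
Qed.

Lemma M2norm_le_entry_sum M : M2norm M <= entry_sum M.
Proof.
  apply (M2norm_lub M). intros r [v [Hv ->]]. now apply M2app_le_entry_sum.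
Qed.

Lemma M2norm_ge_app M v : C2norm v <= 1 -> C2norm (M2app M v) <= M2norm M.
Proof. intros Hv. apply (M2norm_lub M). eauto. Qed.

(* Each entry is the value of a coordinate of M on a unit basis vector. *)
Lemma M2norm_entries M :
  Cmod (m11 M) <= M2norm M /\ Cmod (m12 M) <= M2norm M /\
  Cmod (m21 M) <= M2norm M /\ Cmod (m22 M) <= M2norm M.
Proof.
  assert (He1 : C2norm (C1, C0) = 1).
  { unfold C2norm; cbn [fst snd]. rewrite Cmod_C1, Cmod_C0.
    replace (1 ^ 2 + 0 ^ 2) with 1 by ring. apply sqrt_1. }
  assert (He2 : C2norm (C0, C1) = 1).
  { unfold C2norm; cbn [fst snd]. rewrite Cmod_C1, Cmod_C0.
    replace (0 ^ 2 + 1 ^ 2) with 1 by ring. apply sqrt_1. }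
  pose proof (M2norm_ge_app M _ (Req_le _ _ He1)) as H1.
  pose proof (M2norm_ge_app M _ (Req_le _ _ He2)) as H2.
  destruct M as [[a b] [c d]]. unfold m11, m12, m21, m22, M2app in *; cbn [fst snd] in *.
  replace (Cadd (Cmul a C1) (Cmul b C0)) with a in H1 by ring.
  replace (Cadd (Cmul c C1) (Cmul d C0)) with c in H1 by ring.
  replace (Cadd (Cmul a C0) (Cmul b C1)) with b in H2 by ring.
  replace (Cadd (Cmul c C0) (Cmul d C1)) with d in H2 by ring.
  pose proof (C2norm_fst_le (a, c)); pose proof (C2norm_snd_le (a, c)).
  pose proof (C2norm_fst_le (b, d)); pose proof (C2norm_snd_le (b, d)).
  cbn [fst snd] in *. repeat split; lra.
Qed.

Lemma entry_dist_le X Y :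
  Cmod (Csub (m11 X) (m11 Y)) <= M2norm (M2sub X Y) /\
  Cmod (Csub (m12 X) (m12 Y)) <= M2norm (M2sub X Y).
Proof.
  destruct (M2norm_entries (M2sub X Y)) as [H11 [H12 _]].
  replace (m11 (M2sub X Y)) with (Csub (m11 X) (m11 Y)) in H11
    by (unfold m11, M2sub, M2add, M2scale; cbn [fst snd]; change (1, 0) with C1; ring).
  replace (m12 (M2sub X Y)) with (Csub (m12 X) (m12 Y)) in H12
    by (unfold m12, M2sub, M2add, M2scale; cbn [fst snd]; change (1, 0) with C1; ring).
  now split.
Qed.

Lemma M2norm_ge0 M : 0 <= M2norm M.
Proof. pose proof (proj1 (M2norm_entries M)); pose proof (Cmod_ge0 (m11 M)). lra. Qed.

Lemma M2norm_sub_le X Y : M2norm (M2sub X Y) <= 4 * (M2norm X + M2norm Y).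
Proof.
  eapply Rle_trans; [apply M2norm_le_entry_sum|].
  pose proof (M2norm_entries X); pose proof (M2norm_entries Y).
  assert (Hsub : forall x y, Cmod (Cadd x (Cmul (Copp C1) y)) <= Cmod x + Cmod y).
  { intros x y. replace (Cadd x (Cmul (Copp C1) y)) with (Csub x y) by ring. apply Cmod_sub. }
  destruct X as [[a b] [c d]], Y as [[e f] [g h]].
  unfold M2sub, M2add, M2scale, entry_sum, m11, m12, m21, m22 in *; cbn [fst snd] in *.
  change (1, 0) with C1.
  pose proof (Hsub a e); pose proof (Hsub b f); pose proof (Hsub c g); pose proof (Hsub d h). lra.
Qed.

(* Homogeneity of the operator norm (the inequality we need): |k Mv| = |k| |Mv|. *)
Lemma M2norm_scale_ge k M : Cmod k * M2norm M <= M2norm (M2scale k M).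
Proof.
  pose proof (M2norm_ge0 M); pose proof (M2norm_ge0 (M2scale k M)).
  destruct (Req_dec (Cmod k) 0) as [Hk0|Hk0]; [rewrite Hk0; lra|].
  assert (Hk : 0 < Cmod k) by (pose proof (Cmod_ge0 k); lra).
  rewrite Rmult_comm. apply Rle_div_r; [exact Hk|].
  apply (M2norm_lub M). intros r [v [Hv ->]].
  pose proof (M2norm_ge_app (M2scale k M) v Hv) as Hkv.
  replace (M2app (M2scale k M) v)
    with (Cmul k (fst (M2app M v)), Cmul k (snd (M2app M v))) in Hkv
    by (destruct M as [[a b] [c d]]; unfold M2app, M2scale; cbn [fst snd]; f_equal; ring).
  rewrite C2norm_scale, <- surjective_pairing, Rmult_comm in Hkv.
  now apply Rle_div_r.
Qed.

(** * Complex series *)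

Definition Cis_series (u : nat -> C) (l : C) : Prop :=
  is_series (fun n => fst (u n)) (fst l) /\ is_series (fun n => snd (u n)) (snd l).

Definition Clim0 (p : nat -> C) : Prop :=
  is_lim_seq (fun n => fst (p n)) 0 /\ is_lim_seq (fun n => snd (p n)) 0.

Lemma Rseries_correct u l : is_series u l -> Rseries u = l.
Proof.
  intros Hu. apply is_series_Reals in Hu. unfold Rseries.
  assert (Hs : infinite_sum u (epsilon (inhabits 0) (infinite_sum u)))
    by (apply epsilon_spec; eauto).
  eapply uniqueness_sum; eauto.
Qed.

Lemma Rseries_Series u : ex_series u -> Rseries u = Series u.
Proof. intros Hu. apply Rseries_correct, Series_correct, Hu. Qed.

Lemma Cseries_correct u l : Cis_series u l -> Cseries u = l.
Proof.
  intros [H1 H2]. unfold Cseries.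
  rewrite (Rseries_correct _ _ H1), (Rseries_correct _ _ H2). now destruct l.
Qed.

Lemma Cis_series_ext u v l : (forall n, u n = v n) -> Cis_series u l -> Cis_series v l.
Proof.
  intros Huv [H1 H2].
  split; [eapply is_series_ext; [|exact H1] | eapply is_series_ext; [|exact H2]];
    intros n; cbv beta; now rewrite Huv.
Qed.

Lemma Cis_series_plus u v l m :
  Cis_series u l -> Cis_series v m -> Cis_series (fun n => Cadd (u n) (v n)) (Cadd l m).
Proof. intros [Hu1 Hu2] [Hv1 Hv2]. split; now apply (is_series_plus (V := R_NormedModule)). Qed.

Lemma Cis_series_scal c u l :
  Cis_series u l -> Cis_series (fun n => Cmul c (u n)) (Cmul c l).
Proof.
  intros [H1 H2].
  pose proof (is_series_scal_l (V := R_NormedModule) (fst c) _ _ H1) as Hc1.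
  pose proof (is_series_scal_l (V := R_NormedModule) (fst c) _ _ H2) as Hc2.
  pose proof (is_series_scal_l (V := R_NormedModule) (snd c) _ _ H1) as Hs1.
  pose proof (is_series_scal_l (V := R_NormedModule) (snd c) _ _ H2) as Hs2.
  split.
  - exact (is_series_minus (V := R_NormedModule) _ _ _ _ Hc1 Hs2).
  - exact (is_series_plus (V := R_NormedModule) _ _ _ _ Hc2 Hs1).
Qed.

Lemma Cis_series_shift u l :
  Cis_series u l -> Cis_series (fun n => u (S n)) (Csub l (u 0%nat)).
Proof.
  intros [H1 H2]. split.
  - apply (is_series_incr_1 (fun n => fst (u n))). cbn.
    now replace (fst l + - fst (u 0%nat) + fst (u 0%nat)) with (fst l) by ring.
  - apply (is_series_incr_1 (fun n => snd (u n))). cbn.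
    now replace (snd l + - snd (u 0%nat) + snd (u 0%nat)) with (snd l) by ring.
Qed.

Lemma telescope (p : nat -> R) :
  is_lim_seq p 0 -> is_series (fun n => p n - p (S n)) (p 0%nat).
Proof.
  intros Hp. apply is_series_Reals, is_lim_seq_Reals.
  apply is_lim_seq_ext with (fun n => p 0%nat - p (S n)).
  - induction n as [|n IH]; cbn [sum_f_R0]; [reflexivity|]. rewrite <- IH. ring.
  - replace (Finite (p 0%nat)) with (Finite (p 0%nat - 0)) by (f_equal; ring).
    apply is_lim_seq_minus'; [apply is_lim_seq_const|].
    now apply (is_lim_seq_incr_1 p).
Qed.

Lemma Cis_series_telescope (p : nat -> C) :
  Clim0 p -> Cis_series (fun n => Csub (p n) (p (S n))) (p 0%nat).
Proof. intros [H1 H2]. split; now apply telescope. Qed.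

Lemma Clim0_shift p k : Clim0 p -> Clim0 (fun n => p (k + n)%nat).
Proof.
  intros [H1 H2]. apply (is_lim_seq_incr_n _ k) in H1, H2.
  split; [eapply is_lim_seq_ext; [|exact H1] | eapply is_lim_seq_ext; [|exact H2]];
    intros n; cbv beta; now rewrite Nat.add_comm.
Qed.

Lemma Clim0_mul p q : Clim0 p -> Clim0 q -> Clim0 (fun n => Cmul (p n) (q n)).
Proof.
  intros [Hp1 Hp2] [Hq1 Hq2]. unfold Cmul. split; cbn [fst snd].
  - replace (Finite 0) with (Finite (0 * 0 - 0 * 0)) by (f_equal; ring).
    apply is_lim_seq_minus'; now apply is_lim_seq_mult'.
  - replace (Finite 0) with (Finite (0 * 0 + 0 * 0)) by (f_equal; ring).
    apply is_lim_seq_plus'; now apply is_lim_seq_mult'.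
Qed.

Lemma Series_tail_lim0 (u : nat -> R) :
  ex_series u -> is_lim_seq (fun k => Series (fun j => u (k + j)%nat)) 0.
Proof.
  intros Hu. apply is_lim_seq_incr_1.
  apply is_lim_seq_ext with (fun k => Series u - sum_f_R0 u k).
  - intros k. rewrite (Series_incr_n u (S k)) by (auto; lia). cbn [Nat.pred]. ring.
  - replace (Finite 0) with (Finite (Series u - Series u)) by (f_equal; ring).
    apply is_lim_seq_minus'; [apply is_lim_seq_const|].
    apply is_lim_seq_Reals, is_series_Reals, Series_correct, Hu.
Qed.

Lemma Series_tail_le (w : nat -> R) k :
  (forall n, 0 <= w n) -> ex_series w -> Series (fun j => w (k + j)%nat) <= Series w.
Proof.
  intros Hpos Hw. destruct k as [|k].
  - right. now apply Series_ext.
  - rewrite (Series_incr_n w (S k)) by (auto; lia).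
    pose proof (cond_pos_sum w (Nat.pred (S k)) Hpos). lra.
Qed.

(** * The weighted space l^1_omega(N_min) *)

Section L1.
Variable omega : nat -> R.
Hypothesis Hw : is_weight omega.

Lemma weighted_term_ge0 (a : nat -> C) n : 0 <= Cmod (a n) * omega n.
Proof. pose proof (Cmod_ge0 (a n)); pose proof (Hw n). nra. Qed.

Lemma l1_ex_series a : in_l1w omega a -> ex_series (fun n => Cmod (a n) * omega n).
Proof. intros [l Hl]. exists l. now apply is_series_Reals. Qed.

Lemma l1_norm_Series a :
  in_l1w omega a -> l1w_norm omega a = Series (fun n => Cmod (a n) * omega n).
Proof. intros Ha. apply Rseries_Series, l1_ex_series, Ha. Qed.

Lemma l1_term_le a n : in_l1w omega a -> Cmod (a n) * omega n <= l1w_norm omega a.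
Proof.
  intros [l Hl]. unfold l1w_norm.
  rewrite (Rseries_correct _ _ (proj2 (is_series_Reals _ _) Hl)).
  apply Rle_trans with (sum_f_R0 (fun n => Cmod (a n) * omega n) n).
  - destruct n as [|n]; cbn [sum_f_R0]; [lra|].
    pose proof (cond_pos_sum (fun n => Cmod (a n) * omega n) n (weighted_term_ge0 a)). lra.
  - apply sum_incr; [exact Hl | apply weighted_term_ge0].
Qed.

Lemma l1_norm_ge0 a : in_l1w omega a -> 0 <= l1w_norm omega a.
Proof. intros Ha. pose proof (l1_term_le a 0 Ha); pose proof (weighted_term_ge0 a 0). lra. Qed.

Section Parts.
(* [part] is the real or the imaginary part. *)
Variable part : C -> R.
Hypothesis part_le : forall z, Rabs (part z) <= Cmod z.

Lemma l1_part_ex_series a k :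
  in_l1w omega a -> ex_series (fun j => part (a (k + j)%nat)).
Proof.
  intros Ha. apply (ex_series_incr_n (V := R_NormedModule) (fun n => part (a n)) k).
  apply (ex_series_le (V := R_CompleteNormedModule) _ (fun n => Cmod (a n) * omega n));
    [|now apply l1_ex_series].
  intros n. change (Rabs (part (a n)) <= Cmod (a n) * omega n).
  pose proof (part_le (a n)); pose proof (Cmod_ge0 (a n)); pose proof (Hw n). nra.
Qed.

Lemma l1_part_tail_le a k :
  in_l1w omega a -> Rabs (Series (fun j => part (a (k + j)%nat))) <= l1w_norm omega a.
Proof.
  intros Ha.
  set (w := fun n => Cmod (a n) * omega n).
  assert (Hle : forall n, Rabs (part (a n)) <= w n).
  { intros n. unfold w. pose proof (part_le (a n)); pose proof (Cmod_ge0 (a n)); pose proof (Hw n). nra. }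
  assert (Hwk : ex_series (fun j => w (k + j)%nat))
    by (apply (ex_series_incr_n (V := R_NormedModule) w k), l1_ex_series, Ha).
  assert (Habs : ex_series (fun j => Rabs (part (a (k + j)%nat)))).
  { apply (ex_series_le (V := R_CompleteNormedModule) _ _) with (2 := Hwk).
    intros j. change (Rabs (Rabs (part (a (k + j)%nat))) <= w (k + j)%nat).
    rewrite Rabs_Rabsolu. apply Hle. }
  eapply Rle_trans; [now apply Series_Rabs|].
  eapply Rle_trans; [apply Series_le; [|exact Hwk]|].
  - intros j. split; [apply Rabs_pos | apply Hle].
  - rewrite l1_norm_Series by exact Ha.
    apply Series_tail_le; [apply weighted_term_ge0 | now apply l1_ex_series].
Qed.
End Parts.

Lemma Ctail_is_series a k : in_l1w omega a -> Cis_series (fun j => a (k + j)%nat) (Ctail a k).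
Proof.
  intros Ha.
  pose proof (l1_part_ex_series fst Cmod_fst a k Ha) as H1.
  pose proof (l1_part_ex_series snd Cmod_snd a k Ha) as H2.
  unfold Ctail, Cseries.
  split; cbn [fst snd]; rewrite Rseries_Series by assumption; now apply Series_correct.
Qed.

Lemma Ctail_lim0 a : in_l1w omega a -> Clim0 (Ctail a).
Proof.
  intros Ha. split.
  - apply is_lim_seq_ext with (fun k => Series (fun j => fst (a (k + j)%nat))).
    + intros k. symmetry. apply Rseries_Series, (l1_part_ex_series fst Cmod_fst), Ha.
    + apply (Series_tail_lim0 (fun n => fst (a n))), (l1_part_ex_series fst Cmod_fst a 0), Ha.
  - apply is_lim_seq_ext with (fun k => Series (fun j => snd (a (k + j)%nat))).
    + intros k. symmetry. apply Rseries_Series, (l1_part_ex_series snd Cmod_snd), Ha.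
    + apply (Series_tail_lim0 (fun n => snd (a n))), (l1_part_ex_series snd Cmod_snd a 0), Ha.
Qed.

Lemma Ctail_succ a k : in_l1w omega a -> Ctail a k = Cadd (a k) (Ctail a (S k)).
Proof.
  intros Ha.
  assert (Hs : Ctail a (S k) = Csub (Ctail a k) (a k)).
  { apply Cseries_correct.
    apply Cis_series_ext with (fun n => a (k + S n)%nat);
      [intros n; now rewrite Nat.add_succ_r|].
    pose proof (Cis_series_shift _ _ (Ctail_is_series a k Ha)) as Hsh.
    cbv beta in Hsh. now rewrite Nat.add_0_r in Hsh. }
  rewrite Hs. ring.
Qed.

Lemma Ctail_add a b k : in_l1w omega a -> in_l1w omega b ->
  Ctail (seq_add a b) k = Cadd (Ctail a k) (Ctail b k).
Proof.
  intros Ha Hb. apply Cseries_correct.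
  exact (Cis_series_plus _ _ _ _ (Ctail_is_series a k Ha) (Ctail_is_series b k Hb)).
Qed.

Lemma Ctail_scale c a k : in_l1w omega a -> Ctail (seq_scale c a) k = Cmul c (Ctail a k).
Proof. intros Ha. apply Cseries_correct, Cis_series_scal, Ctail_is_series, Ha. Qed.

(* Tail sums are multiplicative for the N_min convolution: each term of [x * y] is a
   difference of consecutive products of tails, so the tail series telescopes. *)
Lemma Ctail_conv x y k : in_l1w omega x -> in_l1w omega y ->
  Ctail (conv_min x y) k = Cmul (Ctail x k) (Ctail y k).
Proof.
  intros Hx Hy.
  set (P := fun n => Cmul (Ctail x n) (Ctail y n)).
  assert (Hdiff : forall n, conv_min x y n = Csub (P n) (P (S n))).
  { intros n. unfold conv_min, P. rewrite (Ctail_succ x n Hx), (Ctail_succ y n Hy). ring. }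
  assert (HP : Clim0 (fun j => P (k + j)%nat))
    by (apply Clim0_shift, Clim0_mul; now apply Ctail_lim0).
  apply Cseries_correct.
  apply Cis_series_ext with (fun j => Csub (P (k + j)%nat) (P (k + S j)%nat)).
  - intros j. rewrite Hdiff. now rewrite Nat.add_succ_r.
  - pose proof (Cis_series_telescope _ HP) as Htel. cbv beta in Htel.
    now rewrite Nat.add_0_r in Htel.
Qed.

Lemma Ctail_bound a k : in_l1w omega a -> Cmod (Ctail a k) <= 2 * l1w_norm omega a.
Proof.
  intros Ha. eapply Rle_trans; [apply Cmod_le_parts|].
  unfold Ctail, Cseries; cbn [fst snd].
  rewrite !Rseries_Series
    by first [apply (l1_part_ex_series fst Cmod_fst), Ha | apply (l1_part_ex_series snd Cmod_snd), Ha].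
  pose proof (l1_part_tail_le fst Cmod_fst a k Ha).
  pose proof (l1_part_tail_le snd Cmod_snd a k Ha). lra.
Qed.
End L1.

(** * Point masses *)

Definition dlt (n : nat) : nat -> C := fun k => if Nat.eqb k n then C1 else C0.

Lemma is_series_single (u : nat -> R) m : (forall j, j <> m -> u j = 0) -> is_series u (u m).
Proof.
  intros Hu. apply is_series_Reals, is_lim_seq_Reals, is_lim_seq_incr_n with (N := m).
  apply is_lim_seq_ext with (fun _ => u m); [|apply is_lim_seq_const].
  intros n. induction n as [|n IH].
  - destruct m as [|m]; cbn [sum_f_R0 Nat.add]; [reflexivity|].
    rewrite (sum_eq_R0 u m) by (intros j Hj; apply Hu; lia). ring.
  - replace (S n + m)%nat with (S (n + m)) by lia. cbn [sum_f_R0].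
    rewrite <- IH, (Hu (S (n + m))) by lia. ring.
Qed.

Lemma Cis_series_single (u : nat -> C) m :
  (forall j, j <> m -> u j = C0) -> Cis_series u (u m).
Proof.
  intros Hu. split; apply (is_series_single (fun n => _ (u n))); intros j Hj; now rewrite Hu.
Qed.

Lemma Ctail_dlt n k : Ctail (dlt n) k = if Nat.leb k n then C1 else C0.
Proof.
  unfold Ctail. destruct (Nat.leb_spec k n) as [Hkn|Hkn].
  - replace C1 with (dlt n (k + (n - k))%nat)
      by (unfold dlt; now rewrite Nat.add_comm, Nat.sub_add, Nat.eqb_refl).
    apply Cseries_correct, (Cis_series_single (fun j => dlt n (k + j)%nat)).
    intros j Hj. unfold dlt. destruct (Nat.eqb_spec (k + j) n); [lia | reflexivity].
  - replace C0 with (dlt n (k + 0)%nat)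
      by (unfold dlt; destruct (Nat.eqb_spec (k + 0) n); [lia | reflexivity]).
    apply Cseries_correct, (Cis_series_single (fun j => dlt n (k + j)%nat)).
    intros j Hj. unfold dlt. destruct (Nat.eqb_spec (k + j) n); [lia | reflexivity].
Qed.

Lemma conv_dlt m n : conv_min (dlt m) (dlt n) = dlt (Nat.min m n).
Proof.
  apply functional_extensionality. intros k. unfold conv_min. rewrite !Ctail_dlt. unfold dlt.
  destruct (Nat.eqb_spec k m), (Nat.eqb_spec k n), (Nat.leb_spec k n), (Nat.leb_spec (S k) m),
    (Nat.eqb_spec k (Nat.min m n)); try lia; ring.
Qed.

Section PointMassNorm.
Variable omega : nat -> R.

Lemma dlt_l1 n : in_l1w omega (dlt n) /\ l1w_norm omega (dlt n) = omega n.
Proof.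
  assert (Hs : is_series (fun k => Cmod (dlt n k) * omega k) (omega n)).
  { replace (omega n) with (Cmod (dlt n n) * omega n)
      by (unfold dlt; rewrite Nat.eqb_refl, Cmod_C1; ring).
    apply (is_series_single (fun k => Cmod (dlt n k) * omega k)).
    intros k Hk. unfold dlt. destruct (Nat.eqb_spec k n); [lia|]. rewrite Cmod_C0. ring. }
  split.
  - exists (omega n). now apply is_series_Reals.
  - now apply Rseries_correct.
Qed.

Lemma l1_scale c a : in_l1w omega a ->
  in_l1w omega (seq_scale c a) /\ l1w_norm omega (seq_scale c a) = Cmod c * l1w_norm omega a.
Proof.
  intros [l Hl]. apply is_series_Reals in Hl.
  assert (Hs : is_series (fun n => Cmod (seq_scale c a n) * omega n) (Cmod c * l)).
  { apply (is_series_ext (V := R_NormedModule) (fun n => Cmod c * (Cmod (a n) * omega n))).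
    - intros n. unfold seq_scale. rewrite Cmod_mul. symmetry. apply Rmult_assoc.
    - exact (is_series_scal_l (V := R_NormedModule) _ _ _ Hl). }
  split.
  - exists (Cmod c * l). now apply is_series_Reals.
  - unfold l1w_norm. rewrite (Rseries_correct _ _ Hs), (Rseries_correct _ _ Hl). reflexivity.
Qed.
End PointMassNorm.

(** * The almost multiplicative map T_N *)

Section Matrices.
Variable W : R.

Definition Qm : M2 := ((C1, rc W), (C0, C0)).
Definition Am : M2 := ((C1, Cadd (rc W) (rc W)), (C0, Copp C1)).
Definition Im : M2 := ((C1, C0), (C0, C1)).
Definition Tmat (al be ga : C) : M2 :=
  M2add (M2add (M2scale al Qm) (M2scale be Am)) (M2scale ga Im).
(* The matrix [[0, 2W], [0, -2]] measuring the failure of multiplicativity. *)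
Definition Dm : M2 := ((C0, Cadd (rc W) (rc W)), (C0, Copp (Cadd C1 C1))).

Lemma Tmat_add a1 b1 c1 a2 b2 c2 :
  Tmat (Cadd a1 a2) (Cadd b1 b2) (Cadd c1 c2) = M2add (Tmat a1 b1 c1) (Tmat a2 b2 c2).
Proof. unfold Tmat, Qm, Am, Im. m2_ring. Qed.

Lemma Tmat_scale k a1 b1 c1 :
  Tmat (Cmul k a1) (Cmul k b1) (Cmul k c1) = M2scale k (Tmat a1 b1 c1).
Proof. unfold Tmat, Qm, Am, Im. m2_ring. Qed.

(* If al, be, ga come from three characters p0, pN, pN1 (resp. q0, qN, qN1) as
   al = p0 - pN, be = pN - pN1, ga = pN1, then the product defect of Tmat is a
   multiple of D by the product of the middle coefficients. *)
Lemma Tmat_defect p0 pN pN1 q0 qN qN1 :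
  M2sub (Tmat (Csub (Cmul p0 q0) (Cmul pN qN)) (Csub (Cmul pN qN) (Cmul pN1 qN1)) (Cmul pN1 qN1))
        (M2mul (Tmat (Csub p0 pN) (Csub pN pN1) pN1) (Tmat (Csub q0 qN) (Csub qN qN1) qN1))
  = M2scale (Cmul (Csub pN pN1) (Csub qN qN1)) Dm.
Proof. unfold Tmat, Qm, Am, Im, Dm. m2_ring. Qed.

Lemma Tmat_Q : Tmat C1 C0 C0 = Qm.
Proof. unfold Tmat, Qm, Am, Im. m2_ring. Qed.

Lemma Tmat_A : Tmat C0 C1 C0 = Am.
Proof. unfold Tmat, Qm, Am, Im. m2_ring. Qed.

Hypothesis HW : 1 <= W.

Lemma Tmat_entry_sum al be ga :
  entry_sum (Tmat al be ga) <= (Cmod al + Cmod be + Cmod ga) * (12 * W).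
Proof.
  unfold entry_sum, m11, m12, m21, m22, Tmat, Qm, Am, Im, M2add, M2scale. cbn [fst snd].
  pose proof (Cmod_lin3 al be ga C1 C1 C1).
  pose proof (Cmod_lin3 al be ga (rc W) (Cadd (rc W) (rc W)) C0).
  pose proof (Cmod_lin3 al be ga C0 C0 C0).
  pose proof (Cmod_lin3 al be ga C0 (Copp C1) C1).
  rewrite Cmod_opp, Cmod_C1, Cmod_C0, Cmod_rc, Rabs_right, Cmod_rc_double in * by lra.
  set (s := Cmod al + Cmod be + Cmod ga) in *.
  assert (0 <= s) by (unfold s; pose proof (Cmod_ge0 al); pose proof (Cmod_ge0 be);
                      pose proof (Cmod_ge0 ga); lra).
  nra.
Qed.

Lemma Dm_entry_sum k : entry_sum (M2scale k Dm) <= Cmod k * (4 * W).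
Proof.
  unfold entry_sum, m11, m12, m21, m22, M2scale, Dm. cbn [fst snd].
  rewrite !Cmod_mul, Cmod_opp, Cmod_C0, Cmod_rc_double by lra.
  pose proof (Cmod_add C1 C1). rewrite Cmod_C1 in *.
  pose proof (Cmod_ge0 k). pose proof (Cmod_ge0 (Cadd C1 C1)). nra.
Qed.
End Matrices.

(** Only the middle
    coefficient phi_N - phi_(N+1), i.e. evaluation at N, is not multiplicative, and it is
    small on the unit ball when omega N is large. *)
Section TN.
Variable omega : nat -> R.
Hypothesis Hw : is_weight omega.
Variable N : nat.

Definition TN (a : nat -> C) : M2 :=
  Tmat (omega N) (Csub (Ctail a 0) (Ctail a N)) (Csub (Ctail a N) (Ctail a (S N)))
       (Ctail a (S N)).

Lemma TN_bounded_linear : bounded_linear omega TN.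
Proof.
  pose proof (Hw N) as HW.
  split; [|split].
  - intros a b Ha Hb. unfold TN. rewrite !(Ctail_add omega Hw) by assumption.
    rewrite <- Tmat_add. f_equal; ring.
  - intros c a Ha. unfold TN. rewrite !(Ctail_scale omega Hw) by assumption.
    rewrite <- Tmat_scale. f_equal; ring.
  - exists (10 * (12 * omega N)). intros a Ha.
    eapply Rle_trans; [apply M2norm_le_entry_sum|].
    eapply Rle_trans; [apply Tmat_entry_sum, HW|].
    pose proof (Ctail_bound omega Hw a 0 Ha); pose proof (Ctail_bound omega Hw a N Ha);
    pose proof (Ctail_bound omega Hw a (S N) Ha).
    pose proof (Cmod_sub (Ctail a 0) (Ctail a N)).
    pose proof (Cmod_sub (Ctail a N) (Ctail a (S N))).
    pose proof (Cmod_ge0 (Csub (Ctail a 0) (Ctail a N))).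
    pose proof (Cmod_ge0 (Csub (Ctail a N) (Ctail a (S N)))).
    pose proof (Cmod_ge0 (Ctail a (S N))).
    replace (10 * (12 * omega N) * l1w_norm omega a)
      with (10 * l1w_norm omega a * (12 * omega N)) by ring.
    apply Rmult_le_compat_r; lra.
Qed.

(* On the unit ball the defect is x(N) y(N) D, and |x(N)|, |y(N)| <= 1 / omega N. *)
Lemma TN_defect_pair x y :
  in_l1w omega x -> in_l1w omega y -> l1w_norm omega x <= 1 -> l1w_norm omega y <= 1 ->
  M2norm (M2sub (TN (conv_min x y)) (M2mul (TN x) (TN y))) <= 4 / omega N.
Proof.
  intros Hx Hy Hnx Hny. pose proof (Hw N) as HW.
  unfold TN. rewrite !(Ctail_conv omega Hw) by assumption. rewrite Tmat_defect.
  eapply Rle_trans; [apply M2norm_le_entry_sum|].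
  eapply Rle_trans; [apply Dm_entry_sum, HW|].
  replace (Csub (Ctail x N) (Ctail x (S N))) with (x N)
    by (rewrite (Ctail_succ omega Hw x N Hx); ring).
  replace (Csub (Ctail y N) (Ctail y (S N))) with (y N)
    by (rewrite (Ctail_succ omega Hw y N Hy); ring).
  rewrite Cmod_mul.
  pose proof (l1_term_le omega Hw x N Hx); pose proof (l1_term_le omega Hw y N Hy).
  pose proof (Cmod_ge0 (x N)); pose proof (Cmod_ge0 (y N)).
  assert (Hxn : Cmod (x N) <= / omega N)
    by (apply (Rmult_le_reg_r (omega N)); [lra|]; rewrite Rinv_l; lra).
  assert (Hyn : Cmod (y N) <= / omega N)
    by (apply (Rmult_le_reg_r (omega N)); [lra|]; rewrite Rinv_l; lra).
  replace (4 / omega N) with (/ omega N * / omega N * (4 * omega N)) by (field; lra).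
  apply Rmult_le_compat_r; [lra|]. now apply Rmult_le_compat.
Qed.

Lemma TN_defect : defect omega TN <= 4 / omega N.
Proof.
  apply Rsup_le.
  - destruct (dlt_l1 omega 0) as [H0 _].
    destruct (l1_scale omega C0 (dlt 0) H0) as [Hz Hnz].
    rewrite Cmod_C0, Rmult_0_l in Hnz.
    eexists. exists (seq_scale C0 (dlt 0)), (seq_scale C0 (dlt 0)).
    repeat split; try exact Hz; lra.
  - intros r [x [y [Hx [Hy [Hnx [Hny ->]]]]]]. now apply TN_defect_pair.
Qed.

Hypothesis HN : (0 < N)%nat.

Lemma TN_dlt0 : TN (dlt 0) = Qm (omega N).
Proof.
  unfold TN. rewrite !Ctail_dlt, <- Tmat_Q.
  destruct (Nat.leb_spec 0 0), (Nat.leb_spec N 0), (Nat.leb_spec (S N) 0); try lia.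
  f_equal; ring.
Qed.

Lemma TN_dltN : TN (dlt N) = Am (omega N).
Proof.
  unfold TN. rewrite !Ctail_dlt, <- Tmat_A.
  destruct (Nat.leb_spec 0 N), (Nat.leb_spec N N), (Nat.leb_spec (S N) N); try lia.
  f_equal; ring.
Qed.
End TN.

(** * T_N is far from every multiplicative map *)

Section Distance.
Variable omega : nat -> R.
Hypothesis Hw : is_weight omega.

Lemma opnorm_ge U K a :
  (forall b, in_l1w omega b -> M2norm (U b) <= K * l1w_norm omega b) ->
  in_l1w omega a -> l1w_norm omega a <= 1 -> M2norm (U a) <= opnorm omega U.
Proof.
  intros HK Ha Hna. apply Rsup_ge; [|now exists a].
  exists (Rabs K). intros r [b [Hb [Hnb ->]]].
  pose proof (HK b Hb); pose proof (l1_norm_ge0 omega Hw b Hb).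
  pose proof (Rle_abs K); pose proof (Rabs_pos K). nra.
Qed.

Lemma bounded_sub T S : bounded_linear omega T -> bounded_linear omega S ->
  exists K, forall a, in_l1w omega a ->
    M2norm (M2sub (T a) (S a)) <= K * l1w_norm omega a.
Proof.
  intros [_ [_ [KT HKT]]] [_ [_ [KS HKS]]]. exists (4 * (KT + KS)). intros a Ha.
  pose proof (M2norm_sub_le (T a) (S a)); pose proof (HKT a Ha); pose proof (HKS a Ha). nra.
Qed.

(* Testing T - S on the normalized point mass delta_n / omega(n). *)
Lemma point_mass_le_opnorm T S n : bounded_linear omega T -> bounded_linear omega S ->
  M2norm (M2sub (T (dlt n)) (S (dlt n)))
  <= omega n * opnorm omega (fun a => M2sub (T a) (S a)).
Proof.
  intros HT HS. pose proof (Hw n) as Hn.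
  set (t := / omega n). assert (Ht : 0 < t) by (apply Rinv_0_lt_compat; lra).
  destruct (dlt_l1 omega n) as [Hd Hnd].
  destruct (l1_scale omega (rc t) (dlt n) Hd) as [Htd Hntd].
  rewrite Hnd, Cmod_rc, Rabs_right in Hntd by lra.
  destruct (bounded_sub T S HT HS) as [K HK].
  pose proof (opnorm_ge _ K _ HK Htd ltac:(rewrite Hntd; unfold t; rewrite Rinv_l; lra)) as Hle.
  destruct HT as [_ [HTs _]], HS as [_ [HSs _]].
  cbv beta in Hle. rewrite HTs, HSs in Hle by exact Hd.
  replace (M2sub (M2scale (rc t) (T (dlt n))) (M2scale (rc t) (S (dlt n))))
    with (M2scale (rc t) (M2sub (T (dlt n)) (S (dlt n)))) in Hle by m2_ring.
  pose proof (M2norm_scale_ge (rc t) (M2sub (T (dlt n)) (S (dlt n)))) as Hsc.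
  rewrite Cmod_rc, Rabs_right in Hsc by lra.
  apply (Rmult_le_reg_l t); [exact Ht|].
  replace (t * (omega n * opnorm omega (fun a => M2sub (T a) (S a))))
    with (opnorm omega (fun a => M2sub (T a) (S a))) by (unfold t; field; lra).
  lra.
Qed.
End Distance.

(* If P, F are idempotents with P F = F P = P (as are S(delta_0), S(delta_N) for a
   multiplicative S), then with a = P11, b = P12, f = F12 we have a^3 f (f - b) = 0.
   The left-hand side is an explicit combination of four of the defining relations. *)
Lemma idempotent_pair_constraint P F :
  M2mul P P = P -> M2mul P F = P -> M2mul F P = P -> M2mul F F = F ->
  Cmul (Cmul (Cmul (m11 P) (m11 P)) (m11 P)) (Cmul (m12 F) (Csub (m12 F) (m12 P))) = C0.
Proof.
  destruct P as [[a b] [c d]], F as [[e f] [g h]]. intros HPP HPF HFP HFF.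
  apply (f_equal m11) in HPP. apply (f_equal m12) in HPF.
  apply (f_equal m21) in HFP. apply (f_equal m22) in HFF.
  unfold M2mul, m11, m12, m21, m22 in *. cbn [fst snd] in *.
  set (u := Csub C1 h).
  set (r1 := Csub (Cadd (Cmul a f) (Cmul b h)) b).
  set (r2 := Csub (Cadd (Cmul g a) (Cmul h c)) c).
  set (r3 := Csub (Cadd (Cmul g f) (Cmul h h)) h).
  set (r4 := Csub (Cadd (Cmul a a) (Cmul b c)) a).
  assert (E1 : r1 = C0) by (unfold r1; rewrite HPF; ring).
  assert (E2 : r2 = C0) by (unfold r2; rewrite HFP; ring).
  assert (E3 : r3 = C0) by (unfold r3; rewrite HFF; ring).
  assert (E4 : r4 = C0) by (unfold r4; rewrite HPP; ring).
  transitivity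
    (Cadd (Cmul (Cmul b b)
             (Csub (Csub (Csub (Csub (Cmul (Cmul a a) r3) (Cmul r4 (Cmul u u)))
                               (Cmul (Cmul c u) r1)) (Cmul (Cmul b u) r2)) (Cmul r1 r2)))
          (Cmul r1 (Csub (Cadd (Cmul (Cmul (Cadd C1 C1) (Cmul a b)) u) (Cmul a r1))
                         (Cmul (Cmul a a) b)))).
  - unfold u, r1, r2, r3, r4. ring.
  - rewrite E1, E2, E3, E4. ring.
Qed.

(* The numerical heart of the lower bound: the constraint a^3 f (f - b) = 0 is
   incompatible with a ~ 1, b ~ W, f ~ 2W up to relative errors below 1/2. *)
Lemma constraint_forces_distance (a b f : C) (W c r : R) :
  1 <= c -> c <= W ->
  Cmod (Csub C1 a) <= r * c -> Cmod (Csub (rc W) b) <= r * c ->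
  Cmod (Csub (Cadd (rc W) (rc W)) f) <= r * W ->
  Cmul (Cmul (Cmul a a) a) (Cmul f (Csub f b)) = C0 -> / (2 * c) <= r.
Proof.
  intros Hc HcW Ha Hb Hf Hzero.
  destruct (Rlt_or_le r (/ (2 * c))) as [Hr|]; [exfalso|assumption].
  assert (Hrc : r * c < / 2).
  { apply (Rmult_lt_compat_r c) in Hr; [|lra].
    replace (/ (2 * c) * c) with (/ 2) in Hr by (field; lra). exact Hr. }
  assert (Hr0 : 0 <= r) by (pose proof (Cmod_ge0 (Csub C1 a)); nra).
  assert (HrW : r * W < W / 2) by (pose proof (Rmult_le_compat_l r c W Hr0 HcW); nra).
  assert (Ha2 : 1 / 2 <= Cmod a).
  { pose proof (Cmod_sub_triangle C1 a C0). rewrite !Cmod_sub0, Cmod_C1 in *. lra. }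
  apply (f_equal Cmod) in Hzero. rewrite !Cmod_mul, Cmod_C0 in Hzero.
  pose proof (Cmod_rc_double W ltac:(lra)) as H2W.
  destruct (Rmult_integral _ _ Hzero) as [Ha0|Hff]; [nra|].
  destruct (Rmult_integral _ _ Hff) as [Hf0|Hfb].
  - (* f = 0 is at distance 2W from 2W *)
    pose proof (Cmod_sub_triangle (Cadd (rc W) (rc W)) f C0).
    rewrite !Cmod_sub0, H2W, Hf0 in *. lra.
  - (* f = b cannot be close to both W and 2W *)
    pose proof (Cmod_sub_triangle (Cadd (rc W) (rc W)) f b).
    pose proof (Cmod_sub_triangle (Cadd (rc W) (rc W)) b (rc W)).
    replace (Csub (Cadd (rc W) (rc W)) (rc W)) with (rc W) in * by ring.
    rewrite Cmod_rc, Rabs_right in * by lra. rewrite Cmod_sub_sym in Hb.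
    pose proof (Rmult_le_compat_l r c W Hr0 HcW). lra.
Qed.

(* Indeed
   S(delta_0), S(delta_N) satisfy the idempotent relations, while
   T_N(delta_0) = Q and T_N(delta_N) = A violate the resulting constraint. *)
Lemma TN_far_from_mult omega N S :
  is_weight omega -> (0 < N)%nat -> omega 0%nat <= omega N -> is_mult omega S ->
  / (2 * omega 0%nat) <= opnorm omega (fun a => M2sub (TN omega N a) (S a)).
Proof.
  intros Hw HN Hc [HS Smul].
  pose proof (TN_bounded_linear omega Hw N) as HT.
  set (r := opnorm omega (fun a => M2sub (TN omega N a) (S a))).
  pose proof (point_mass_le_opnorm omega Hw _ _ 0 HT HS) as H0.
  pose proof (point_mass_le_opnorm omega Hw _ _ N HT HS) as HNN.
  rewrite (TN_dlt0 omega N HN) in H0. rewrite (TN_dltN omega N HN) in HNN.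
  fold r in H0, HNN.
  destruct (entry_dist_le (Qm (omega N)) (S (dlt 0))) as [H11 H12].
  destruct (entry_dist_le (Am (omega N)) (S (dlt N))) as [_ HN12].
  assert (Hmul : forall m n, M2mul (S (dlt m)) (S (dlt n)) = S (dlt (Nat.min m n))).
  { intros m n. rewrite <- conv_dlt. symmetry. apply Smul; apply dlt_l1. }
  apply (constraint_forces_distance (m11 (S (dlt 0))) (m12 (S (dlt 0))) (m12 (S (dlt N)))
           (omega N) (omega 0%nat) r).
  - apply Hw.
  - exact Hc.
  - cbn in H11. lra.
  - cbn in H12. lra.
  - cbn in HN12. lra.
  - apply idempotent_pair_constraint; rewrite Hmul; apply (f_equal (fun k => S (dlt k))); lia.
Qed.

(* Mult(A, B) is nonempty: it contains 0. *)
Lemma zero_is_mult omega : is_mult omega (fun _ => M2zero).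
Proof.
  assert (Hz : M2norm M2zero <= 0).
  { eapply Rle_trans; [apply M2norm_le_entry_sum|].
    unfold entry_sum, m11, m12, m21, m22, M2zero; cbn [fst snd]. rewrite Cmod_C0. lra. }
  split; [split; [|split]|].
  - intros. m2_ring.
  - intros. m2_ring.
  - exists 0. intros. now rewrite Rmult_0_l.
  - intros. m2_ring.
Qed.

(* For eps = 1/(4 omega 0) and any delta > 0, pick N with omega N > omega 0 + 4 / delta
   (so N > 0): then def(T_N) <= delta while dist(T_N, Mult) >= 1/(2 omega 0) > eps. *)
Theorem theoremt (omega : nat -> R) (Hw : is_weight omega) (Hunb : unbounded omega) :
  ~ uniformly_AMNM omega.
Proof.
  intros Hamnm.
  pose proof (Hw 0%nat) as Hw0.
  destruct (Hamnm (/ (4 * omega 0%nat))) as [delta [Hdelta Hclose]];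
    [apply Rinv_0_lt_compat; lra|].
  destruct (Hunb (omega 0%nat + 4 / delta)) as [N HN].
  assert (H4d : 0 < 4 / delta) by (apply Rdiv_lt_0_compat; lra).
  assert (HN0 : (0 < N)%nat) by (destruct N; [lra | lia]).
  assert (Hdef : defect omega (TN omega N) <= delta).
  { eapply Rle_trans; [apply TN_defect, Hw|].
    apply Rle_div_l; [lra|].
    assert (H4 : 4 / delta < omega N) by lra.
    apply Rlt_div_l in H4; [lra | exact Hdelta]. }
  pose proof (Hclose _ (TN_bounded_linear omega Hw N) Hdef) as Hdist.
  assert (Hfar : / (2 * omega 0%nat) <= dist_mult omega (TN omega N)).
  { apply Rinf_ge.
    - eexists. exists (fun _ => M2zero). split; [apply zero_is_mult | reflexivity].
    - intros r [S [HS ->]]. apply TN_far_from_mult; auto; lra. }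
  assert (/ (4 * omega 0%nat) < / (2 * omega 0%nat)) by (apply Rinv_lt_contravar; nra).
  lra.
Qed.
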